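(* Consider the delayed bandit setting and Algorithm DEW described in the context, run with learning rate $\eta>0$ and a known bound $d_{\max}$ with $d_{\max}\ge \max_t d_t$. Then, against an oblivious adversary, its expected regret satisfies $$\bar{\mathcal R}_T\le \max\left\{\frac{\ln K}{\eta},\,4e\,d_{\max}\ln K\right\}+\eta\left(\frac{KTe}{2}+D\right),$$ where $D=\sum_{t=1}^T d_t$. In particular, if $T$ and $D$ are known and $\eta=\sqrt{\frac{\ln K}{KTe/2+D}}$ satisfies $\eta\le \frac{1}{4e\,d_{\max}}$, then $$\bar{\mathcal R}_T\le 2\sqrt{\left(\frac{KTe}{2}+D\right)\ln K}.$$
   Context: Setting: fix integers $K\ge 2$, $T\ge 1$, and write $[K]=\{1,\dots,K\}$. An oblivious adversary fixes in advance losses $\ell_t^a\in[0,1]$ for $t=1,2,\dots$, $a\in[K]$, and nonnegative integer delays $d_1,d_2,\dots$. In each round $t$ the learner picks (possibly at random) an action $A_t\in[K]$ and suffers loss $\ell_t^{A_t}$; at the end of round $t$ (after $A_t$ has been chosen) it observes the pairs $(s,\ell_s^{A_s})$ for all $s\le t$ with $s+d_s=t$. The expected regret is $\bar{\mathcal R}_T=\mathbb E\big[\sum_{t=1}^T\ell_t^{A_t}\big]-\min_{a\in[K]}\sum_{t=1}^T\ell_t^a$, the expectation being over the learner's randomization. $D=\sum_{t=1}^T d_t$. Algorithm DEW (delayed exponential weights) with inputs $\eta>0$ and $d_{\max}\ge\max_t d_t$: set $\eta'=\min\{\eta,(4e\,d_{\max})^{-1}\}$ and $w_0^a=1$ for all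 $a$. For $t=1,2,\dots$: let $p_t^a=w_{t-1}^a/\sum_b w_{t-1}^b$; draw $A_t\sim p_t$ and play it; at the end of round $t$, for every $s$ with $s+d_s=t$ form the estimates $\hat\ell_s^a=\ell_s^a\mathbb 1(a=A_s)/p_s^a$ for all $a$; update $w_t^a=w_{t-1}^a\exp\big(-\eta'\sum_{s:\,s+d_s=t}\hat\ell_s^a\big)$. *)

From Stdlib Require Import Reals Lra Lia List.
Import ListNotations.
Open Scope R_scope.

(* Conventions:
   - rounds are t = 1, 2, ...; actions are encoded as 0, ..., K-1
     (action a in [K] of the paper is encoded as a-1);
   - l t a : loss of action a at round t; d t : delay of round t;
   - a learner history h : list nat is the list [A_1; ...; A_{t-1}]
     of actions played so far. *)

Fixpoint sumR (n : nat) (f : nat -> R) : R :=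
  match n with
  | O => 0
  | S m => sumR m f + f m
  end.

(* eta' = min { eta, (4 e dmax)^{-1} }, with (4 e 0)^{-1} read as +infinity *)
Definition eta_prime (eta dmax : R) : R :=
  if Rle_dec (eta * (4 * exp 1 * dmax)) 1 then eta else / (4 * exp 1 * dmax).

(* Weight w_t^a after t completed rounds, given the action sequence A
   (A s = action at round s) and the list L = [p_1; ...; p_t] of the
   distributions used in rounds 1..t.  Feedback of round s is available at
   the end of round t iff s + d_s <= t. *)
Definition dew_weight (eta' : R) (l : nat -> nat -> R) (d : nat -> nat)
    (t : nat) (A : nat -> nat) (L : list (nat -> R)) (a : nat) : R :=
  exp (- eta' * sumR t (fun i =>
         let s := S i in
         if (s + d s <=? t)%nat then
           (if Nat.eqb (A s) a then l s a / nth i L (fun _ => 1) a else 0)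
         else 0)).

Definition dew_next (K : nat) (eta' : R) (l : nat -> nat -> R) (d : nat -> nat)
    (t : nat) (A : nat -> nat) (L : list (nat -> R)) : nat -> R :=
  fun a => dew_weight eta' l d t A L a /
           sumR K (fun b => dew_weight eta' l d t A L b).

Fixpoint dew_probs (K : nat) (eta' : R) (l : nat -> nat -> R) (d : nat -> nat)
    (n : nat) (A : nat -> nat) : list (nat -> R) :=
  match n with
  | O => []
  | S m => let L := dew_probs K eta' l d m A in
           L ++ [dew_next K eta' l d m A L]
  end.

(* Distribution p_t played by DEW at round t = length h + 1 after history h. *)
Definition dew_p (K : nat) (eta dmax : R) (l : nat -> nat -> R) (d : nat -> nat)
    (h : list nat) : nat -> R :=
  let eta' := eta_prime eta dmax in
  let A := fun s => nth (s - 1) h 0%nat in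
  dew_next K eta' l d (length h) A (dew_probs K eta' l d (length h) A).

(* Expected remaining loss of DEW over the next n rounds, starting after
   history h (expectation over the learner's sequential randomization). *)
Fixpoint dew_exp_loss (K : nat) (eta dmax : R) (l : nat -> nat -> R)
    (d : nat -> nat) (n : nat) (h : list nat) : R :=
  match n with
  | O => 0
  | S m => sumR K (fun a => dew_p K eta dmax l d h a *
             (l (S (length h)) a + dew_exp_loss K eta dmax l d m (h ++ [a])))
  end.

Definition dew_expected_loss (K T : nat) (eta dmax : R) (l : nat -> nat -> R)
    (d : nat -> nat) : R :=
  dew_exp_loss K eta dmax l d T [].

Definition cum_loss (T : nat) (l : nat -> nat -> R) (a : nat) : R :=
  sumR T (fun i => l (S i) a).

Definition total_delay (T : nat) (d : nat -> nat) : R :=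
  sumR T (fun i => INR (d (S i))).

(* DEW plays p_t, exponential weights with the effective rate
   eta' = min (eta, 1 / (4 e dmax)) on the importance-weighted loss estimates
   whose feedback has arrived.  We compare it with the reference distribution
   q_t: exponential weights on the estimates of ALL past rounds, pending or not.
   1. Stability: while the feedback of a round is pending, the played
      distribution grows by at most a factor e; consequently q_t <= e p_t.
   2. Cost of delays: <p_t - q_t, l_t> is at most eta' times the p_t-average of
      the pending estimates, whose expectation is at most the number of pending
      rounds; summed over t this is at most D.
   3. q is Hedge run on the estimates: the potential argument bounds its
      estimated regret by ln K / eta' + eta'/2 sum_t <q_t, est_t^2>; the
      estimates are unbiased and, since q_t <= e p_t, the second moment is at
      most K e per round.
   Together: regret <= ln K / eta' + eta' (K T e / 2 + D), and the properties of
   eta' give the theorem; the tuned rate gives 2 sqrt ((K T e / 2 + D) ln K). *)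

From Stdlib Require Import Reals Lra Lia List Wf_nat.
From Coquelicot Require Import Coquelicot.
Import ListNotations.
Open Scope R_scope.

Lemma sumR_ext n f g : (forall i, (i < n)%nat -> f i = g i) -> sumR n f = sumR n g.
Proof.
  induction n as [|n IH]; simpl; intros H; auto.
  rewrite IH by (intros; apply H; lia). rewrite H by lia. reflexivity.
Qed.

Lemma sumR_le n f g : (forall i, (i < n)%nat -> f i <= g i) -> sumR n f <= sumR n g.
Proof.
  induction n as [|n IH]; simpl; intros H; [lra|].
  specialize (IH ltac:(intros; apply H; lia)). specialize (H n ltac:(lia)). lra.
Qed.

Lemma sumR_zero n : sumR n (fun _ => 0) = 0.
Proof. induction n as [|n IH]; simpl; auto. rewrite IH; ring. Qed.

Lemma sumR_nonneg n f : (forall i, (i < n)%nat -> 0 <= f i) -> 0 <= sumR n f.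
Proof. intros H. rewrite <- (sumR_zero n). apply sumR_le; auto. Qed.

Lemma sumR_plus n f g : sumR n (fun i => f i + g i) = sumR n f + sumR n g.
Proof. induction n as [|n IH]; simpl; [ring|]. rewrite IH; ring. Qed.

Lemma sumR_minus n f g : sumR n (fun i => f i - g i) = sumR n f - sumR n g.
Proof. induction n as [|n IH]; simpl; [ring|]. rewrite IH; ring. Qed.

Lemma sumR_scal n c f : sumR n (fun i => c * f i) = c * sumR n f.
Proof. induction n as [|n IH]; simpl; [ring|]. rewrite IH; ring. Qed.

Lemma sumR_const n c : sumR n (fun _ => c) = INR n * c.
Proof. induction n as [|n IH]; simpl sumR; [simpl; ring|]. rewrite IH, S_INR; ring. Qed.

Lemma sumR_shift n f : sumR (S n) f = f 0%nat + sumR n (fun i => f (S i)).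
Proof. induction n as [|n IH]; simpl in *; [ring|]. rewrite IH; ring. Qed.

Lemma sumR_swap n m (f : nat -> nat -> R) :
  sumR n (fun i => sumR m (fun j => f i j)) = sumR m (fun j => sumR n (fun i => f i j)).
Proof.
  induction n as [|n IH]; simpl.
  - rewrite sumR_zero; auto.
  - rewrite IH, <- sumR_plus. reflexivity.
Qed.

Lemma sumR_single n a (x : nat -> R) :
  sumR n (fun b => if Nat.eqb a b then x b else 0) = if Nat.ltb a n then x a else 0.
Proof.
  induction n as [|n IH]; simpl; auto. rewrite IH.
  destruct (Nat.eqb_spec a n); destruct (Nat.ltb_spec a n); destruct (Nat.ltb_spec a (S n));
    subst; try lia; ring.
Qed.

Lemma sumR_le_term n f k :
  (forall i, (i < n)%nat -> 0 <= f i) -> (k < n)%nat -> f k <= sumR n f.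
Proof.
  induction n as [|n IH]; intros H Hk; [lia|]. simpl.
  destruct (Nat.eq_dec k n) as [->|Hkn].
  - assert (0 <= sumR n f) by (apply sumR_nonneg; intros; apply H; lia). lra.
  - assert (f k <= sumR n f) by (apply IH; [intros; apply H|]; lia).
    specialize (H n ltac:(lia)). lra.
Qed.

Lemma importance_weighting K (p w f : nat -> R) : (forall c, (c < K)%nat -> 0 < p c) ->
  sumR K (fun b => p b * sumR K (fun c => w c * (if Nat.eqb b c then f c / p c else 0)))
  = sumR K (fun c => w c * f c).
Proof.
  intros Hp. apply sumR_ext. intros b Hb.
  rewrite (sumR_ext K _ (fun c => if Nat.eqb b c then w c * f c / p c else 0)).
  2:{ intros c _. destruct (Nat.eqb b c); unfold Rdiv; ring. }
  rewrite sumR_single. destruct (Nat.ltb_spec b K); [|lia]. specialize (Hp b Hb). field. lra.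
Qed.
(* At most [max 0 (n - x)] indices [i < n] satisfy [x <= i]; this is how a
   bound on the delays turns into a bound on the number of pending rounds. *)
Lemma sumR_count_ge n x :
  sumR n (fun i => if Rle_dec x (INR i) then 1 else 0) <= Rmax 0 (INR n - x).
Proof.
  induction n as [|n IH]; simpl sumR.
  - simpl. apply Rmax_l.
  - rewrite S_INR. destruct (Rle_dec x (INR n)).
    + rewrite Rmax_right in IH |- * by lra. lra.
    + rewrite Rmax_left in IH by lra. pose proof (Rmax_l 0 (INR n + 1 - x)). lra.
Qed.

Definition ew (K : nat) (et : R) (L : nat -> R) (b : nat) : R :=
  exp (- et * L b) / sumR K (fun c => exp (- et * L c)).

Section ExponentialWeights.
Variables (K : nat) (et : R).
Hypothesis HK : (1 <= K)%nat.

Lemma sumR_exp_pos L : 0 < sumR K (fun c => exp (- et * L c)).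
Proof.
  destruct K as [|K']; [lia|]. simpl.
  assert (0 <= sumR K' (fun c => exp (- et * L c)))
    by (apply sumR_nonneg; intros; apply Rlt_le, exp_pos).
  pose proof (exp_pos (- et * L K')). lra.
Qed.

Lemma ew_pos L b : 0 < ew K et L b.
Proof. apply Rdiv_lt_0_compat; [apply exp_pos|apply sumR_exp_pos]. Qed.

Lemma ew_sum L : sumR K (ew K et L) = 1.
Proof.
  unfold ew, Rdiv.
  rewrite (sumR_ext K _ (fun c => / sumR K (fun c => exp (- et * L c)) * exp (- et * L c)))
    by (intros; ring).
  rewrite sumR_scal. field. apply Rgt_not_eq, sumR_exp_pos.
Qed.

Lemma ew_ext L L' b : (forall c, L c = L' c) -> ew K et L b = ew K et L' b.
Proof.
  intros H. unfold ew. rewrite H. f_equal.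
  apply sumR_ext. intros c _. rewrite H. reflexivity.
Qed.

Lemma ew_shift L L' D b : (forall c, L' c = L c + D c) ->
  ew K et L' b * sumR K (fun c => ew K et L c * exp (- et * D c))
  = ew K et L b * exp (- et * D b).
Proof.
  intros H. unfold ew.
  pose proof (sumR_exp_pos L). pose proof (sumR_exp_pos L').
  rewrite (sumR_ext K (fun c => exp (- et * L c) / sumR K (fun c0 => exp (- et * L c0))
                                * exp (- et * D c))
     (fun c => / sumR K (fun c0 => exp (- et * L c0)) * exp (- et * L' c))).
  2:{ intros c _. rewrite H, Rmult_plus_distr_l, exp_plus.
      field. lra. }
  rewrite sumR_scal, H, Rmult_plus_distr_l, exp_plus.
  field. lra.
Qed.

Lemma exp_ge_1m y : 1 - y <= exp (- y).
Proof. pose proof (exp_ineq1_le (- y)). lra. Qed.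

Lemma exp_neg_le_1 x : 0 <= x -> exp (- x) <= 1.
Proof.
  intros Hx. rewrite <- exp_0. destruct (Req_dec x 0) as [->|Hx0].
  - rewrite Ropp_0. lra.
  - apply Rlt_le, exp_increasing. lra.
Qed.

Hypothesis Het : 0 < et.

Lemma ew_shift_bounds L L' D b : (forall c, L' c = L c + D c) ->
  (forall c, (c < K)%nat -> 0 <= D c) -> 0 <= D b ->
  ew K et L' b * (1 - et * sumR K (fun c => ew K et L c * D c)) <= ew K et L b
  /\ ew K et L b * exp (- et * D b) <= ew K et L' b.
Proof.
  intros H HD HDb.
  pose proof (ew_shift L L' D b H) as E.
  set (Z := sumR K (fun c => ew K et L c * exp (- et * D c))) in *.
  assert (Zle : Z <= 1).
  { rewrite <- (ew_sum L). apply sumR_le. intros c Hc.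
    pose proof (ew_pos L c). specialize (HD c Hc).
    pose proof (exp_neg_le_1 (et * D c) ltac:(nra)). rewrite Ropp_mult_distr_l in *.
    nra. }
  assert (Zge : 1 - et * sumR K (fun c => ew K et L c * D c) <= Z).
  { rewrite <- (ew_sum L) at 1. rewrite <- sumR_scal, <- sumR_minus. apply sumR_le.
    intros c Hc. pose proof (ew_pos L c). pose proof (exp_ge_1m (et * D c)).
    rewrite Ropp_mult_distr_l in *. nra. }
  pose proof (ew_pos L' b). pose proof (ew_pos L b).
  pose proof (exp_neg_le_1 (et * D b) ltac:(nra)). rewrite Ropp_mult_distr_l in *.
  split; nra.
Qed.

End ExponentialWeights.

Lemma inv_one_minus_le_exp x p p' : 0 <= x <= 1/2 -> 0 <= p' -> p' * (1 - x) <= p ->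
  p' <= p * exp (2 * x).
Proof.
  intros Hx Hp' H. pose proof (exp_ineq1_le (2 * x)).
  assert (p' <= p' * (1 - x) * (1 + 2 * x)) by (assert (0 <= x * (1 - 2 * x)) by nra; nra).
  assert (p' * (1 - x) * (1 + 2 * x) <= p * (1 + 2 * x)) by (apply Rmult_le_compat_r; lra).
  assert (0 <= p) by nra.
  assert (p * (1 + 2 * x) <= p * exp (2 * x)) by (apply Rmult_le_compat_l; lra). lra.
Qed.

(* Second-order upper bound on [exp] on the negative half-line:
   [exp (-x) <= 1 - x + x^2/2] for [x >= 0]; the function
   [y |-> exp y * (1 - y + y^2/2)] is nondecreasing. *)
Lemma exp_neg_quad x : 0 <= x -> exp (- x) <= 1 - x + x^2/2.
Proof.
  intros Hx.
  set (f := fun y => exp y * (1 - y + y^2/2)).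
  assert (Hder : forall y, derivable_pt_lim f y (exp y * (y^2/2))).
  { intros y. apply is_derive_Reals. unfold f. auto_derive; auto. field. }
  assert (Hinc : increasing f).
  { apply (nonneg_derivative_1 f (fun y => exist _ _ (Hder y))). intros y.
    simpl. apply Rmult_le_pos; [apply Rlt_le, exp_pos | nra]. }
  specialize (Hinc 0 x Hx). unfold f in Hinc. rewrite exp_0 in Hinc.
  assert (E : exp (- x) * exp x = 1)
    by (rewrite <- exp_plus; replace (- x + x) with 0 by ring; apply exp_0).
  pose proof (exp_pos (- x)). nra.
Qed.

Section Hedge.
Variables (K : nat) (et : R) (x : nat -> nat -> R).
Hypothesis HK : (1 <= K)%nat.
Hypothesis Het : 0 < et.
Hypothesis x_nonneg : forall n c, (c < K)%nat -> 0 <= x n c.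

Definition hedge_loss (n c : nat) : R := sumR n (fun i => x i c).
Definition hedge_dist (n : nat) : nat -> R := ew K et (hedge_loss n).

Definition hedge_potential (n : nat) : R := sumR K (fun c => exp (- et * hedge_loss n c)).

Lemma hedge_potential_step n :
  hedge_potential (S n) <= hedge_potential n *
    exp (- et * sumR K (fun c => hedge_dist n c * x n c)
         + et ^ 2 / 2 * sumR K (fun c => hedge_dist n c * x n c ^ 2)).
Proof.
  assert (Hrecur : hedge_potential (S n)
                   = hedge_potential n * sumR K (fun c => hedge_dist n c * exp (- et * x n c))).
  { unfold hedge_potential, hedge_dist, ew. rewrite <- sumR_scal. apply sumR_ext. intros c _.
    unfold hedge_loss. simpl. rewrite Rmult_plus_distr_l, exp_plus. field.
    apply Rgt_not_eq, (sumR_exp_pos K et HK). }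
  assert (Hquad : sumR K (fun c => hedge_dist n c * exp (- et * x n c))
      <= 1 - et * sumR K (fun c => hedge_dist n c * x n c)
           + et ^ 2 / 2 * sumR K (fun c => hedge_dist n c * x n c ^ 2)).
  { rewrite <- (ew_sum K et HK (hedge_loss n)).
    rewrite <- !sumR_scal, <- sumR_minus, <- sumR_plus. apply sumR_le. intros c Hc.
    pose proof (ew_pos K et HK (hedge_loss n) c) as Hq. fold (hedge_dist n) in Hq.
    pose proof (exp_neg_quad (et * x n c) ltac:(apply Rmult_le_pos; [lra|auto])) as Hexp.
    rewrite Ropp_mult_distr_l in Hexp.
    assert (hedge_dist n c * exp (- et * x n c)
            <= hedge_dist n c * (1 - et * x n c + (et * x n c) ^ 2 / 2))
      by (apply Rmult_le_compat_l; lra).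
    unfold hedge_dist in *. nra. }
  rewrite Hrecur. apply Rmult_le_compat_l.
  - apply Rlt_le, (sumR_exp_pos K et HK).
  - pose proof (exp_ineq1_le (- et * sumR K (fun c => hedge_dist n c * x n c)
                             + et ^ 2 / 2 * sumR K (fun c => hedge_dist n c * x n c ^ 2))).
    lra.
Qed.

Lemma hedge_regret T a : (a < K)%nat ->
  sumR T (fun n => sumR K (fun c => hedge_dist n c * x n c)) - hedge_loss T a
  <= ln (INR K) / et + et / 2 * sumR T (fun n => sumR K (fun c => hedge_dist n c * x n c ^ 2)).
Proof.
  intros Ha.
  set (G := fun n => sumR K (fun c => hedge_dist n c * x n c)).
  set (V := fun n => sumR K (fun c => hedge_dist n c * x n c ^ 2)).
  assert (Hpot : forall n,
            hedge_potential n <= INR K * exp (sumR n (fun j => - et * G j + et ^ 2 / 2 * V j))).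
  { induction n as [|n IH].
    - unfold hedge_potential, hedge_loss. simpl. rewrite exp_0, Rmult_1_r.
      rewrite (sumR_ext K _ (fun _ => 1)) by (intros; rewrite Rmult_0_r; apply exp_0).
      rewrite sumR_const. lra.
    - change (sumR (S n) ?f) with (sumR n f + f n).
      rewrite (exp_plus (sumR n _)), <- Rmult_assoc.
      eapply Rle_trans; [apply hedge_potential_step|].
      apply Rmult_le_compat_r; [apply Rlt_le, exp_pos | exact IH]. }
  assert (Ha_pot : exp (- et * hedge_loss T a) <= hedge_potential T).
  { apply (sumR_le_term K (fun c => exp (- et * hedge_loss T c))); auto.
    intros; apply Rlt_le, exp_pos. }
  set (S0 := sumR T (fun j => - et * G j + et ^ 2 / 2 * V j)).
  assert (HKpos : 0 < INR K) by (apply lt_0_INR; lia).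
  assert (Hlog : - et * hedge_loss T a <= ln (INR K) + S0).
  { destruct (Rle_dec (- et * hedge_loss T a) (ln (INR K) + S0)) as [|Hnot]; auto.
    exfalso. assert (Hlt : exp (ln (INR K) + S0) < exp (- et * hedge_loss T a))
      by (apply exp_increasing; lra).
    rewrite exp_plus, exp_ln in Hlt by auto. specialize (Hpot T). fold S0 in Hpot. lra. }
  unfold S0 in Hlog. rewrite sumR_plus, !sumR_scal in Hlog.
  apply (Rmult_le_reg_l et); auto.
  replace (et * (ln (INR K) / et + et / 2 * sumR T V)) with (ln (INR K) + et ^ 2 / 2 * sumR T V)
    by (field; lra).
  lra.
Qed.

End Hedge.

(* A history is the list of actions
   played so far; [P h] is the distribution of the next action after history
   [h], and [Ex K P n h F] is the expectation of [F] evaluated on the history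
   obtained from [h] after [n] more rounds. *)
Fixpoint Ex (K : nat) (P : list nat -> nat -> R) (n : nat) (h : list nat)
    (F : list nat -> R) : R :=
  match n with
  | O => F h
  | S m => sumR K (fun a => P h a * Ex K P m (h ++ [a]) F)
  end.

Section Expectation.
Variables (K : nat) (P : list nat -> nat -> R).
Hypothesis P_nonneg : forall h a, (a < K)%nat -> 0 <= P h a.
Hypothesis P_sum : forall h, sumR K (P h) = 1.

Definition stable_after (k : nat) (F : list nat -> R) : Prop :=
  forall g, (k <= length g)%nat -> forall a, F (g ++ [a]) = F g.

Lemma Ex_ext n h F G : (forall rest, length rest = n -> F (h ++ rest) = G (h ++ rest)) ->
  Ex K P n h F = Ex K P n h G.
Proof.
  revert h. induction n as [|n IH]; intros h H; simpl.
  - specialize (H [] eq_refl). rewrite app_nil_r in H. auto.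
  - apply sumR_ext. intros a _. f_equal. apply IH. intros rest Hr.
    rewrite <- app_assoc. apply H. simpl; lia.
Qed.

Lemma Ex_le n h F G : (forall rest, length rest = n -> F (h ++ rest) <= G (h ++ rest)) ->
  Ex K P n h F <= Ex K P n h G.
Proof.
  revert h. induction n as [|n IH]; intros h H; simpl.
  - specialize (H [] eq_refl). rewrite app_nil_r in H. auto.
  - apply sumR_le. intros a Ha. apply Rmult_le_compat_l; auto. apply IH. intros rest Hr.
    rewrite <- app_assoc. apply H. simpl; lia.
Qed.

Lemma Ex_const n h c : Ex K P n h (fun _ => c) = c.
Proof.
  revert h. induction n as [|n IH]; intros h; simpl; auto.
  rewrite (sumR_ext K _ (fun a => c * P h a)) by (intros; rewrite IH; ring).
  rewrite sumR_scal, P_sum. ring.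
Qed.

Lemma Ex_plus n h F G : Ex K P n h (fun g => F g + G g) = Ex K P n h F + Ex K P n h G.
Proof.
  revert h. induction n as [|n IH]; intros h; simpl; auto.
  rewrite <- sumR_plus. apply sumR_ext. intros. rewrite IH. ring.
Qed.

Lemma Ex_minus n h F G : Ex K P n h (fun g => F g - G g) = Ex K P n h F - Ex K P n h G.
Proof.
  revert h. induction n as [|n IH]; intros h; simpl; auto.
  rewrite <- sumR_minus. apply sumR_ext. intros. rewrite IH. ring.
Qed.

Lemma Ex_scal n h c F : Ex K P n h (fun g => c * F g) = c * Ex K P n h F.
Proof.
  revert h. induction n as [|n IH]; intros h; simpl; auto.
  rewrite <- sumR_scal. apply sumR_ext. intros. rewrite IH. ring.
Qed.

Lemma Ex_sumR n h N (F : nat -> list nat -> R) :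
  Ex K P n h (fun g => sumR N (fun i => F i g)) = sumR N (fun i => Ex K P n h (F i)).
Proof.
  induction N as [|N IH]; simpl.
  - apply Ex_const.
  - rewrite Ex_plus, IH. reflexivity.
Qed.

Lemma Ex_tower n m h F : Ex K P (n + m) h F = Ex K P n h (fun g => Ex K P m g F).
Proof.
  revert h. induction n as [|n IH]; intros h; simpl; auto.
  apply sumR_ext. intros. rewrite IH. reflexivity.
Qed.

Lemma Ex_stable n h k F : stable_after k F -> (k <= length h)%nat -> Ex K P n h F = F h.
Proof.
  intros HF. revert h. induction n as [|n IH]; intros h Hh; simpl; auto.
  rewrite (sumR_ext K _ (fun a => F h * P h a)).
  - rewrite sumR_scal, P_sum. ring.
  - intros a _. rewrite IH, HF by (rewrite ?length_app; simpl; lia). ring.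
Qed.

Lemma Ex_prefix T n0 G : (n0 <= T)%nat -> stable_after n0 G ->
  Ex K P T [] G = Ex K P n0 [] G.
Proof.
  intros HT HG. replace T with (n0 + (T - n0))%nat by lia. rewrite Ex_tower.
  apply Ex_ext. intros rest Hr. apply (Ex_stable _ _ n0); auto. simpl; lia.
Qed.

Lemma Ex_last_step T n0 F : (n0 < T)%nat -> stable_after (S n0) F ->
  Ex K P T [] F = Ex K P n0 [] (fun h => sumR K (fun b => P h b * F (h ++ [b]))).
Proof.
  intros HT HF. rewrite (Ex_prefix T (S n0)) by (auto; lia).
  replace (S n0) with (n0 + 1)%nat by lia. rewrite Ex_tower.
  apply Ex_ext. intros rest _. reflexivity.
Qed.

Lemma Ex_condition T n0 F G : (n0 < T)%nat ->
  stable_after (S n0) F -> stable_after n0 G ->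
  (forall h, length h = n0 -> sumR K (fun b => P h b * F (h ++ [b])) = G h) ->
  Ex K P T [] F = Ex K P T [] G.
Proof.
  intros HT HF HG H. rewrite (Ex_last_step T n0 F), (Ex_prefix T n0 G) by (auto; lia).
  apply Ex_ext. intros rest Hr. apply H; auto.
Qed.

Lemma Ex_swap n h1 h2 F G :
  (forall rest, (length rest < n)%nat -> forall a, (a < K)%nat ->
     P (h1 ++ rest) a = P (h2 ++ rest) a) ->
  (forall rest, length rest = n -> F (h1 ++ rest) = G (h2 ++ rest)) ->
  Ex K P n h1 F = Ex K P n h2 G.
Proof.
  revert h1 h2. induction n as [|n IH]; intros h1 h2 HP H; simpl.
  - specialize (H [] eq_refl). rewrite !app_nil_r in H. auto.
  - apply sumR_ext. intros a Ha. f_equal.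
    + specialize (HP [] ltac:(simpl; lia) a Ha). rewrite !app_nil_r in HP. auto.
    + apply IH.
      * intros rest Hr b Hb. rewrite <- !app_assoc. apply HP; simpl; auto; lia.
      * intros rest Hr. rewrite <- !app_assoc. apply H. simpl; lia.
Qed.

End Expectation.
Section Delays.
Variable d : nat -> nat.

Lemma arrival_split w (h : nat -> R) :
  sumR (S w) (fun i => if (S i + d (S i) <=? S w)%nat then h i else 0) =
  sumR w (fun i => if (S i + d (S i) <=? w)%nat then h i else 0) +
  sumR (S w) (fun i => if (S i + d (S i) =? S w)%nat then h i else 0).
Proof.
  change (sumR (S w) ?f) with (sumR w f + f w).
  rewrite (sumR_ext w (fun i => if (S i + d (S i) <=? S w)%nat then h i else 0)
    (fun i => (if (S i + d (S i) <=? w)%nat then h i else 0)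
              + (if (S i + d (S i) =? S w)%nat then h i else 0))).
  2:{ intros i Hi. destruct (Nat.leb_spec (S i + d (S i)) (S w));
      destruct (Nat.leb_spec (S i + d (S i)) w);
      destruct (Nat.eqb_spec (S i + d (S i)) (S w)); try lia; ring. }
  rewrite sumR_plus.
  destruct (Nat.leb_spec (S w + d (S w)) (S w)); destruct (Nat.eqb_spec (S w + d (S w)) (S w));
    try lia; ring.
Qed.

Definition arrivals (w : nat) : R :=
  sumR w (fun i => if (S i + d (S i) =? w)%nat then 1 else 0).

Lemma arrivals_nonneg w : 0 <= arrivals w.
Proof. apply sumR_nonneg. intros. destruct (_ =? _)%nat; lra. Qed.

Definition late_arrivals (u w : nat) : R :=
  sumR w (fun i => if (S i + d (S i) <=? w)%nat
                   then (if (u <? S i + d (S i))%nat then 1 else 0) else 0).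

Lemma late_arrivals_nonneg u w : 0 <= late_arrivals u w.
Proof.
  apply sumR_nonneg. intros.
  repeat destruct (_ <=? _)%nat; repeat destruct (_ <? _)%nat; lra.
Qed.

Lemma late_arrivals_empty u : late_arrivals u u = 0.
Proof.
  unfold late_arrivals. transitivity (sumR u (fun _ => 0)); [|apply sumR_zero].
  apply sumR_ext. intros i _.
  destruct (Nat.leb_spec (S i + d (S i)) u); destruct (Nat.ltb_spec u (S i + d (S i)));
    try lia; reflexivity.
Qed.

Lemma late_arrivals_step u w : (u <= w)%nat ->
  late_arrivals u (S w) = late_arrivals u w + arrivals (S w).
Proof.
  intros Huw. unfold late_arrivals, arrivals. rewrite arrival_split. f_equal.
  apply sumR_ext. intros i _.
  destruct (Nat.eqb_spec (S i + d (S i)) (S w)); auto.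
  destruct (Nat.ltb_spec u (S i + d (S i))); auto; lia.
Qed.

Lemma late_arrivals_mono u w k : (u <= w)%nat -> late_arrivals u w <= late_arrivals u (w + k).
Proof.
  intros H. induction k as [|k IH].
  - rewrite Nat.add_0_r; lra.
  - replace (w + S k)%nat with (S (w + k)) by lia. rewrite late_arrivals_step by lia.
    pose proof (arrivals_nonneg (S (w + k))). lra.
Qed.

(* Each round [i + 1] is pending at the end of at most [d_{i+1}] rounds, so the
   total number of (round, pending round) pairs is at most [D]. *)
Lemma pending_total_le_delay T :
  sumR T (fun n => sumR n (fun i => if (S i + d (S i) <=? n)%nat then 0 else 1))
  <= total_delay T d.
Proof.
  apply Rle_trans with (sumR T (fun i => INR (Nat.min (d (S i)) (T - S i)))).
  - induction T as [|T IH]; [simpl; lra|].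
    change (sumR (S T) ?f) with (sumR T f + f T).
    rewrite (sumR_ext T (fun i => INR (Nat.min (d (S i)) (S T - S i)))
       (fun i => INR (Nat.min (d (S i)) (T - S i)) + (if (S i + d (S i) <=? T)%nat then 0 else 1))).
    + rewrite sumR_plus, Nat.sub_diag, Nat.min_0_r. simpl INR. lra.
    + intros i Hi. destruct (Nat.leb_spec (S i + d (S i)) T).
      * rewrite Rplus_0_r. f_equal. lia.
      * replace (Nat.min (d (S i)) (S T - S i)) with (S (Nat.min (d (S i)) (T - S i))) by lia.
        apply S_INR.
  - apply sumR_le. intros. apply le_INR. lia.
Qed.

Variable dmax : R.
Hypothesis Hd : forall t, (1 <= t)%nat -> INR (d t) <= dmax.

Lemma dmax_nonneg : 0 <= dmax.
Proof. pose proof (Hd 1%nat ltac:(lia)). pose proof (pos_INR (d 1%nat)). lra. Qed.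

(* Every round whose feedback arrives in [(u, v]] with [v <= u + d_{u+1}]
   started at most [dmax] rounds before [u]; hence there are at most [2 dmax]. *)
Lemma late_arrivals_bound u v : (u < v)%nat -> (v <= u + d (S u))%nat ->
  late_arrivals u v <= 2 * dmax.
Proof.
  intros H1 H2. unfold late_arrivals.
  apply Rle_trans with (sumR v (fun i => if Rle_dec (INR u - dmax) (INR i) then 1 else 0)).
  - apply sumR_le. intros i Hi.
    destruct (Nat.leb_spec (S i + d (S i)) v); [|destruct (Rle_dec _ _); lra].
    destruct (Nat.ltb_spec u (S i + d (S i))); [|destruct (Rle_dec _ _); lra].
    destruct (Rle_dec (INR u - dmax) (INR i)) as [|Hnot]; [lra|]. exfalso. apply Hnot.
    assert (INR u <= INR i + INR (d (S i))) by (rewrite <- plus_INR; apply le_INR; lia).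
    pose proof (Hd (S i) ltac:(lia)). lra.
  - eapply Rle_trans; [apply sumR_count_ge|]. apply Rmax_lub.
    + pose proof dmax_nonneg. lra.
    + assert (INR v <= INR u + INR (d (S u))) by (rewrite <- plus_INR; apply le_INR; lia).
      pose proof (Hd (S u) ltac:(lia)). lra.
Qed.

Lemma pending_count_bound n :
  sumR n (fun i => if (S i + d (S i) <=? n)%nat then 0 else 1) <= dmax.
Proof.
  apply Rle_trans with (sumR n (fun i => if Rle_dec (INR n - dmax) (INR i) then 1 else 0)).
  - apply sumR_le. intros i Hi. destruct (Nat.leb_spec (S i + d (S i)) n).
    + destruct (Rle_dec _ _); lra.
    + destruct (Rle_dec (INR n - dmax) (INR i)) as [|Hnot]; [lra|]. exfalso. apply Hnot.
      assert (INR n <= INR i + INR (d (S i))) by (rewrite <- plus_INR; apply le_INR; lia).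
      pose proof (Hd (S i) ltac:(lia)). lra.
  - eapply Rle_trans; [apply sumR_count_ge|]. apply Rmax_lub; [apply dmax_nonneg|lra].
Qed.

End Delays.

Section DelayedExponentialWeights.
Variables (K : nat) (et : R) (l : nat -> nat -> R) (d : nat -> nat).

Definition dew_dist (u : nat) (A : nat -> nat) : nat -> R :=
  dew_next K et l d u A (dew_probs K et l d u A).

Definition est (A : nat -> nat) (s b : nat) : R :=
  if Nat.eqb (A s) b then l s b / dew_dist (s - 1) A b else 0.

Definition obs_loss (u : nat) (A : nat -> nat) (b : nat) : R :=
  sumR u (fun i => if (S i + d (S i) <=? u)%nat then est A (S i) b else 0).

Lemma nth_dew_probs A n i dflt : (i < n)%nat ->
  nth i (dew_probs K et l d n A) dflt = dew_dist i A.
Proof.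
  assert (Hlen : forall n, length (dew_probs K et l d n A) = n).
  { induction n0 as [|n0 IH]; simpl; auto. rewrite length_app, IH; simpl; lia. }
  induction n as [|n IH]; intros Hi; [lia|]. simpl.
  destruct (Nat.eq_dec i n) as [->|Hin].
  - rewrite app_nth2 by (rewrite Hlen; lia). rewrite Hlen, Nat.sub_diag. reflexivity.
  - rewrite app_nth1 by (rewrite Hlen; lia). apply IH; lia.
Qed.

Lemma dew_dist_ew u A b : dew_dist u A b = ew K et (obs_loss u A) b.
Proof.
  unfold dew_dist, dew_next, ew, dew_weight, obs_loss.
  assert (E : forall c, sumR u (fun i : nat => let s := S i in
     if (s + d s <=? u)%nat
     then if Nat.eqb (A s) c
          then l s c / nth i (dew_probs K et l d u A) (fun _ : nat => 1) c else 0
     else 0) = sumR u (fun i => if (S i + d (S i) <=? u)%nat then est A (S i) c else 0)).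
  { intros c. apply sumR_ext. intros i Hi. simpl. unfold est.
    rewrite nth_dew_probs by auto. replace (S i - 1)%nat with i by lia. reflexivity. }
  rewrite E. f_equal. apply sumR_ext. intros. rewrite E. reflexivity.
Qed.

Lemma dew_dist_causal : forall u A A',
  (forall j, (1 <= j <= u)%nat -> (j + d j <= u)%nat -> A j = A' j) ->
  forall b, dew_dist u A b = dew_dist u A' b.
Proof.
  intros u. induction u as [u IH] using lt_wf_ind. intros A A' H b.
  rewrite !dew_dist_ew. apply ew_ext. intros c. unfold obs_loss. apply sumR_ext. intros i Hi.
  destruct (Nat.leb_spec (S i + d (S i)) u); auto.
  unfold est. rewrite (H (S i)) by lia. replace (S i - 1)%nat with i by lia.
  rewrite (IH i Hi A A'); auto. intros j Hj Hj'. apply H; lia.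
Qed.

Definition est_mass (u : nat) (A : nat -> nat) (r : nat) : R :=
  sumR K (fun c => dew_dist u A c * est A r c).

Lemma est_mass_eq u A r : est_mass u A r =
  if (A r <? K)%nat then dew_dist u A (A r) * l r (A r) / dew_dist (r - 1) A (A r) else 0.
Proof.
  unfold est_mass, est.
  rewrite (sumR_ext K _ (fun c => if Nat.eqb (A r) c
     then dew_dist u A c * l r c / dew_dist (r - 1) A c else 0)).
  2:{ intros c _. destruct (Nat.eqb (A r) c); unfold Rdiv; ring. }
  apply sumR_single.
Qed.

Hypothesis HK : (1 <= K)%nat.

Lemma dew_dist_pos u A b : 0 < dew_dist u A b.
Proof. rewrite dew_dist_ew. apply ew_pos; auto. Qed.

Lemma dew_dist_sum u A : sumR K (dew_dist u A) = 1.
Proof.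
  rewrite (sumR_ext K _ (ew K et (obs_loss u A))) by (intros; apply dew_dist_ew).
  apply ew_sum; auto.
Qed.

Hypothesis Hl : forall t c, (1 <= t)%nat -> (c < K)%nat -> 0 <= l t c <= 1.

Lemma est_nonneg A s c : (1 <= s)%nat -> (c < K)%nat -> 0 <= est A s c.
Proof.
  intros Hs Hc. unfold est. destruct (Nat.eqb (A s) c); [|lra].
  apply Rmult_le_pos; [apply Hl; auto|]. apply Rlt_le, Rinv_0_lt_compat, dew_dist_pos.
Qed.

Lemma est_mass_nonneg u A r : (1 <= r)%nat -> 0 <= est_mass u A r.
Proof.
  intros Hr. apply sumR_nonneg. intros c Hc.
  apply Rmult_le_pos; [apply Rlt_le, dew_dist_pos | apply est_nonneg; auto].
Qed.

Lemma est_mass_le u A r M : (1 <= r)%nat -> 0 <= M ->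
  ((A r < K)%nat -> dew_dist u A (A r) <= M * dew_dist (r - 1) A (A r)) ->
  est_mass u A r <= M.
Proof.
  intros Hr HM Hratio. rewrite est_mass_eq. destruct (Nat.ltb_spec (A r) K) as [HA|]; [|lra].
  specialize (Hratio HA). specialize (Hl r (A r) Hr HA).
  pose proof (dew_dist_pos u A (A r)). pose proof (dew_dist_pos (r - 1) A (A r)).
  apply (Rmult_le_reg_r (dew_dist (r - 1) A (A r))); auto. unfold Rdiv.
  rewrite Rmult_assoc, Rinv_l by lra. nra.
Qed.

Hypothesis Het : 0 < et.

Lemma dew_dist_update w A b : (b < K)%nat ->
  dew_dist (S w) A b
  * (1 - et * sumR (S w) (fun i => if (S i + d (S i) =? S w)%nat then est_mass w A (S i) else 0))
  <= dew_dist w A b.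
Proof.
  intros Hb.
  set (D := fun c => sumR (S w) (fun i => if (S i + d (S i) =? S w)%nat
                                          then est A (S i) c else 0)).
  assert (HD : forall c, (c < K)%nat -> 0 <= D c).
  { intros c Hc. apply sumR_nonneg. intros i _. destruct (_ =? _)%nat; [|lra].
    apply est_nonneg; auto; lia. }
  destruct (ew_shift_bounds K et HK Het (obs_loss w A) (obs_loss (S w) A) D b) as [Hup _]; auto.
  { intros c. unfold obs_loss, D. apply (arrival_split d). }
  rewrite !dew_dist_ew.
  replace (sumR (S w) (fun i => if (S i + d (S i) =? S w)%nat then est_mass w A (S i) else 0))
    with (sumR K (fun c => ew K et (obs_loss w A) c * D c)); auto.
  unfold D, est_mass.
  rewrite (sumR_ext K _ (fun c => sumR (S w) (fun i => if (S i + d (S i) =? S w)%nat then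
     ew K et (obs_loss w A) c * est A (S i) c else 0))).
  2:{ intros c _. rewrite <- sumR_scal. apply sumR_ext. intros i _. destruct (_ =? _)%nat; ring. }
  rewrite sumR_swap. apply sumR_ext. intros i _. destruct (_ =? _)%nat.
  - apply sumR_ext. intros c _. rewrite dew_dist_ew. reflexivity.
  - apply sumR_zero.
Qed.

Lemma dew_dist_growth w A b : (b < K)%nat ->
  (forall i, (i < S w)%nat -> (S i + d (S i) = S w)%nat -> est_mass w A (S i) <= exp 1) ->
  et * exp 1 * arrivals d (S w) <= 1/2 ->
  dew_dist (S w) A b <= dew_dist w A b * exp (2 * et * exp 1 * arrivals d (S w)).
Proof.
  intros Hb Hmass Hsmall.
  set (X := sumR (S w) (fun i => if (S i + d (S i) =? S w)%nat then est_mass w A (S i) else 0)).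
  assert (HX : 0 <= X <= exp 1 * arrivals d (S w)).
  { unfold X, arrivals. rewrite <- sumR_scal. split.
    - apply sumR_nonneg. intros i _. destruct (_ =? _)%nat; [apply est_mass_nonneg; lia | lra].
    - apply sumR_le. intros i Hi. destruct (Nat.eqb_spec (S i + d (S i)) (S w)); [|lra].
      rewrite Rmult_1_r. apply Hmass; auto. }
  assert (Hx : 0 <= et * X <= 1/2).
  { split; [apply Rmult_le_pos; lra|].
    assert (et * X <= et * (exp 1 * arrivals d (S w))) by (apply Rmult_le_compat_l; lra). lra. }
  pose proof (dew_dist_update w A b Hb) as Hup. fold X in Hup.
  apply Rle_trans with (dew_dist w A b * exp (2 * (et * X))).
  - apply inv_one_minus_le_exp; auto. apply Rlt_le, dew_dist_pos.
  - apply Rmult_le_compat_l; [apply Rlt_le, dew_dist_pos|].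
    destruct (Req_dec (2 * (et * X)) (2 * et * exp 1 * arrivals d (S w))) as [E|E];
      [rewrite E; lra|].
    apply Rlt_le, exp_increasing.
    assert (et * X <= et * (exp 1 * arrivals d (S w))) by (apply Rmult_le_compat_l; lra). lra.
Qed.

Definition full_loss (n : nat) (A : nat -> nat) (b : nat) : R :=
  sumR n (fun i => est A (S i) b).

Definition ref_dist (n : nat) (A : nat -> nat) (b : nat) : R :=
  ew K et (full_loss n A) b.

Definition pending_loss (n : nat) (A : nat -> nat) (b : nat) : R :=
  sumR n (fun i => if (S i + d (S i) <=? n)%nat then 0 else est A (S i) b).

Definition pending_mass (n : nat) (A : nat -> nat) : R :=
  sumR n (fun i => if (S i + d (S i) <=? n)%nat then 0 else est_mass n A (S i)).

Lemma full_loss_split n A c : full_loss n A c = obs_loss n A c + pending_loss n A c.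
Proof.
  unfold full_loss, obs_loss, pending_loss. rewrite <- sumR_plus.
  apply sumR_ext. intros. destruct (_ <=? _)%nat; ring.
Qed.

Lemma pending_loss_nonneg n A c : (c < K)%nat -> 0 <= pending_loss n A c.
Proof.
  intros Hcb. apply sumR_nonneg. intros i _. destruct (_ <=? _)%nat; [lra|].
  apply est_nonneg; auto; lia.
Qed.

Lemma pending_mass_eq n A :
  pending_mass n A = sumR K (fun c => ew K et (obs_loss n A) c * pending_loss n A c).
Proof.
  unfold pending_mass, pending_loss, est_mass.
  rewrite (sumR_ext K _ (fun c => sumR n (fun i => if (S i + d (S i) <=? n)%nat then 0
     else ew K et (obs_loss n A) c * est A (S i) c))).
  2:{ intros c _. rewrite <- sumR_scal. apply sumR_ext. intros i _. destruct (_ <=? _)%nat; ring. }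
  rewrite sumR_swap. apply sumR_ext. intros i _. destruct (_ <=? _)%nat.
  - symmetry. apply sumR_zero.
  - apply sumR_ext. intros c _. rewrite dew_dist_ew. reflexivity.
Qed.

Lemma dew_ref_gap n A :
  sumR K (fun b => (dew_dist n A b - ref_dist n A b) * l (S n) b) <= et * pending_mass n A.
Proof.
  rewrite pending_mass_eq, <- sumR_scal. apply sumR_le. intros b Hb.
  destruct (ew_shift_bounds K et HK Het (obs_loss n A) (full_loss n A) (pending_loss n A) b)
    as [_ Hdown]; auto using full_loss_split, pending_loss_nonneg.
  rewrite <- dew_dist_ew in Hdown |- *. fold (ref_dist n A b) in Hdown.
  set (p := dew_dist n A b) in *. set (q := ref_dist n A b) in *.
  set (D := pending_loss n A b) in *.
  pose proof (exp_ge_1m (et * D)) as Hexp. rewrite Ropp_mult_distr_l in Hexp.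
  assert (Hp : 0 < p) by apply dew_dist_pos.
  pose proof (Hl (S n) b ltac:(lia) Hb) as Hlb.
  assert (HD : 0 <= D) by (apply pending_loss_nonneg; auto).
  assert (p * (1 - et * D) <= p * exp (- et * D)) by (apply Rmult_le_compat_l; lra).
  assert (p - q <= et * (p * D)) by nra.
  assert (0 <= et * (p * D)) by (apply Rmult_le_pos; [lra|apply Rmult_le_pos; lra]).
  destruct (Rle_dec 0 (p - q)).
  - assert ((p - q) * l (S n) b <= (p - q) * 1) by (apply Rmult_le_compat_l; lra). lra.
  - assert ((p - q) * l (S n) b <= 0) by nra. lra.
Qed.

Variable dmax : R.
Hypothesis Hd : forall t, (1 <= t)%nat -> INR (d t) <= dmax.
Hypothesis Hc : et * (4 * exp 1 * dmax) <= 1.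

(* By strong induction
   on [v]: the estimates arriving before [v] come from rounds for which the
   claim is already known, so each has average at most [e] and the weights grow
   by at most [exp (2 et e N)] with [N <= 2 dmax] late arrivals. *)
Lemma dew_stability A : forall v u, (u < v)%nat -> (v <= u + d (S u))%nat ->
  forall b, (b < K)%nat -> dew_dist v A b <= exp 1 * dew_dist u A b.
Proof.
  intros v. induction v as [v IH] using lt_wf_ind. intros u Huv Hvd b Hb.
  pose proof (late_arrivals_bound d dmax Hd u v Huv Hvd) as HN.
  assert (He : 2 <= exp 1) by (pose proof (exp_ineq1_le 1); lra).
  assert (Hgrowth : forall k, (u + k <= v)%nat ->
     dew_dist (u + k) A b <= dew_dist u A b * exp (2 * et * exp 1 * late_arrivals d u (u + k))).
  { induction k as [|k IHk]; intros Hk.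
    - rewrite Nat.add_0_r, late_arrivals_empty, Rmult_0_r, exp_0. lra.
    - set (w := (u + k)%nat) in *. replace (u + S k)%nat with (S w) by (unfold w; lia).
      specialize (IHk ltac:(lia)).
      assert (Harr : arrivals d (S w) <= 2 * dmax).
      { pose proof (late_arrivals_mono d u (S w) (v - S w) ltac:(lia)) as HM.
        replace (S w + (v - S w))%nat with v in HM by (unfold w in *; lia).
        rewrite (late_arrivals_step d) in HM by (unfold w; lia).
        pose proof (late_arrivals_nonneg d u w). lra. }
      assert (Hmass : forall i, (i < S w)%nat -> (S i + d (S i) = S w)%nat ->
                est_mass w A (S i) <= exp 1).
      { intros i Hi Heq. apply est_mass_le; [lia|lra|]. intros HA.
        replace (S i - 1)%nat with i by lia.
        destruct (Nat.eq_dec i w) as [->|Hiw].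
        - pose proof (dew_dist_pos w A (A (S w))). nra.
        - apply IH; lia. }
      assert (Hsmall : et * exp 1 * arrivals d (S w) <= 1/2).
      { assert (et * exp 1 * arrivals d (S w) <= et * exp 1 * (2 * dmax))
          by (apply Rmult_le_compat_l; nra). lra. }
      rewrite (late_arrivals_step d) by (unfold w; lia).
      rewrite Rmult_plus_distr_l, exp_plus, <- Rmult_assoc.
      eapply Rle_trans; [apply dew_dist_growth; auto|].
      apply Rmult_le_compat_r; [apply Rlt_le, exp_pos | exact IHk]. }
  specialize (Hgrowth (v - u)%nat ltac:(lia)). replace (u + (v - u))%nat with v in Hgrowth by lia.
  eapply Rle_trans; [apply Hgrowth|]. rewrite Rmult_comm.
  apply Rmult_le_compat_r; [apply Rlt_le, dew_dist_pos|].
  destruct (Req_dec (2 * et * exp 1 * late_arrivals d u v) 1) as [E|E]; [rewrite E; lra|].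
  apply Rlt_le, exp_increasing.
  assert (et * exp 1 * late_arrivals d u v <= et * exp 1 * (2 * dmax))
    by (apply Rmult_le_compat_l; nra). nra.
Qed.

(* By stability each pending estimate has average at most [e], and at most
   [dmax] rounds are pending. *)
Lemma pending_mass_bound n A : 0 <= pending_mass n A <= exp 1 * dmax.
Proof.
  assert (He : 0 < exp 1) by apply exp_pos.
  assert (Hmass : forall i, (i < n)%nat -> (n < S i + d (S i))%nat ->
            0 <= est_mass n A (S i) <= exp 1).
  { intros i Hi Hi'. split; [apply est_mass_nonneg; lia|].
    apply est_mass_le; [lia|lra|]. intros HA.
    replace (S i - 1)%nat with i by lia. apply dew_stability; auto; lia. }
  unfold pending_mass. split.
  - apply sumR_nonneg. intros i Hi. destruct (Nat.leb_spec (S i + d (S i)) n); [lra|].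
    apply Hmass; auto.
  - apply Rle_trans with
      (exp 1 * sumR n (fun i => if (S i + d (S i) <=? n)%nat then 0 else 1)).
    + rewrite <- sumR_scal. apply sumR_le. intros i Hi.
      destruct (Nat.leb_spec (S i + d (S i)) n); [lra|].
      rewrite Rmult_1_r. apply Hmass; auto.
    + apply Rmult_le_compat_l; [lra|]. apply (pending_count_bound d dmax Hd).
Qed.

Lemma ref_dist_le n A b : (b < K)%nat -> ref_dist n A b <= exp 1 * dew_dist n A b.
Proof.
  intros Hb.
  destruct (ew_shift_bounds K et HK Het (obs_loss n A) (full_loss n A) (pending_loss n A) b)
    as [Hup _]; auto using full_loss_split, pending_loss_nonneg.
  rewrite <- pending_mass_eq, <- dew_dist_ew in Hup. fold (ref_dist n A b) in Hup.
  pose proof (pending_mass_bound n A).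
  assert (et * pending_mass n A <= 1/4).
  { assert (et * pending_mass n A <= et * (exp 1 * dmax)) by (apply Rmult_le_compat_l; lra).
    lra. }
  pose proof (ew_pos K et HK (full_loss n A) b). fold (ref_dist n A b) in *.
  assert (2 <= exp 1) by (pose proof (exp_ineq1_le 1); lra).
  pose proof (dew_dist_pos n A b).
  assert (0 <= et * pending_mass n A) by (apply Rmult_le_pos; lra).
  assert (ref_dist n A b * (3/4) <= ref_dist n A b * (1 - et * pending_mass n A))
    by (apply Rmult_le_compat_l; lra).
  nra.
Qed.


End DelayedExponentialWeights.

Definition actions_of (g : list nat) : nat -> nat := fun s => nth (s - 1) g 0%nat.

Definition dew_kernel (K : nat) (et : R) (l : nat -> nat -> R) (d : nat -> nat)
    (h : list nat) : nat -> R :=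
  dew_dist K et l d (length h) (actions_of h).

Lemma actions_of_prefix h rest j : (1 <= j <= length h)%nat ->
  actions_of (h ++ rest) j = actions_of h j.
Proof. intros H. unfold actions_of. apply app_nth1. lia. Qed.

Lemma actions_of_last h b rest : actions_of (h ++ b :: rest) (S (length h)) = b.
Proof.
  unfold actions_of. replace (S (length h) - 1)%nat with (length h) by lia.
  rewrite app_nth2, Nat.sub_diag by lia. reflexivity.
Qed.

Lemma actions_of_swap h b b' rest j : j <> S (length h) -> (1 <= j)%nat ->
  actions_of (h ++ b :: rest) j = actions_of (h ++ b' :: rest) j.
Proof.
  intros H1 H2. unfold actions_of. destruct (Nat.ltb_spec (j - 1) (length h)).
  - rewrite !app_nth1 by lia. reflexivity.
  - rewrite !app_nth2 by lia. destruct (j - 1 - length h)%nat eqn:E; [lia|]. reflexivity.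
Qed.

Section Histories.
Variables (K : nat) (et : R) (l : nat -> nat -> R) (d : nat -> nat).
Hypothesis HK : (1 <= K)%nat.

Lemma dew_dist_prefix u h rest b : (u <= length h)%nat ->
  dew_dist K et l d u (actions_of (h ++ rest)) b = dew_dist K et l d u (actions_of h) b.
Proof. intros H. apply dew_dist_causal. intros j Hj _. apply actions_of_prefix. lia. Qed.

Lemma est_prefix s h rest c : (1 <= s <= length h)%nat ->
  est K et l d (actions_of (h ++ rest)) s c = est K et l d (actions_of h) s c.
Proof.
  intros H. unfold est. rewrite actions_of_prefix, dew_dist_prefix by lia. reflexivity.
Qed.

Lemma ref_dist_prefix n h rest c : (n <= length h)%nat ->
  ref_dist K et l d n (actions_of (h ++ rest)) c = ref_dist K et l d n (actions_of h) c.
Proof.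
  intros H. apply ew_ext. intros b. unfold full_loss.
  apply sumR_ext. intros i Hi. apply est_prefix. lia.
Qed.

Lemma est_mass_prefix n h rest r : (1 <= r <= n)%nat -> (n <= length h)%nat ->
  est_mass K et l d n (actions_of (h ++ rest)) r = est_mass K et l d n (actions_of h) r.
Proof.
  intros H1 H2. apply sumR_ext. intros c _. rewrite dew_dist_prefix, est_prefix; auto. lia.
Qed.

Lemma est_last h b rest c :
  est K et l d (actions_of (h ++ b :: rest)) (S (length h)) c =
  if Nat.eqb b c then l (S (length h)) c / dew_kernel K et l d h c else 0.
Proof.
  unfold est. rewrite actions_of_last. replace (S (length h) - 1)%nat with (length h) by lia.
  rewrite dew_dist_prefix by lia. reflexivity.
Qed.

Lemma dew_dist_swap u h b b' rest c : (u < S (length h) + d (S (length h)))%nat ->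
  dew_dist K et l d u (actions_of (h ++ b :: rest)) c
  = dew_dist K et l d u (actions_of (h ++ b' :: rest)) c.
Proof.
  intros H. apply dew_dist_causal. intros j Hj Hj'.
  apply actions_of_swap; [intros ->; lia | lia].
Qed.

Lemma dew_kernel_nonneg h a : 0 <= dew_kernel K et l d h a.
Proof. apply Rlt_le, dew_dist_pos; auto. Qed.

Lemma dew_kernel_sum h : sumR K (dew_kernel K et l d h) = 1.
Proof. apply dew_dist_sum; auto. Qed.

Local Notation E T F := (Ex K (dew_kernel K et l d) T [] F).


Lemma E_loss T n : (n < T)%nat ->
  E T (fun g => l (S n) (nth n g 0%nat)) =
  E T (fun g => sumR K (fun b => dew_dist K et l d n (actions_of g) b * l (S n) b)).
Proof.
  intros HT. apply (Ex_condition K _ dew_kernel_sum T n); auto.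
  - intros g Hg a. rewrite app_nth1 by lia. reflexivity.
  - intros g Hg a. apply sumR_ext. intros. rewrite dew_dist_prefix; auto.
  - intros h Hh. subst n. apply sumR_ext. intros b _. unfold dew_kernel.
    rewrite app_nth2, Nat.sub_diag by lia. reflexivity.
Qed.

Lemma E_est T n a : (n < T)%nat -> (a < K)%nat ->
  E T (fun g => est K et l d (actions_of g) (S n) a) = l (S n) a.
Proof.
  intros HT Ha.
  rewrite (Ex_condition K _ dew_kernel_sum T n _ (fun _ => l (S n) a)); auto.
  - apply Ex_const, dew_kernel_sum.
  - intros g Hg b. rewrite est_prefix by lia. reflexivity.
  - intros g _ b. reflexivity.
  - intros h Hh. subst n.
    rewrite (sumR_ext K _ (fun b => if Nat.eqb a b
       then dew_kernel K et l d h b * (l (S (length h)) b / dew_kernel K et l d h b) else 0)).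
    + rewrite sumR_single. destruct (Nat.ltb_spec a K); [|lia].
      pose proof (dew_dist_pos K et l d HK (length h) (actions_of h) a).
      unfold dew_kernel. field. lra.
    + intros b _. rewrite est_last.
      destruct (Nat.eqb_spec b a); destruct (Nat.eqb_spec a b); subst; try lia; ring.
Qed.

(* Unbiasedness, for the reference distribution (fixed before round [n + 1]). *)
Lemma E_ref_est T n : (n < T)%nat ->
  E T (fun g => sumR K (fun c => ref_dist K et l d n (actions_of g) c
                                 * est K et l d (actions_of g) (S n) c)) =
  E T (fun g => sumR K (fun c => ref_dist K et l d n (actions_of g) c * l (S n) c)).
Proof.
  intros HT. apply (Ex_condition K _ dew_kernel_sum T n); auto.
  - intros g Hg a. apply sumR_ext. intros. rewrite ref_dist_prefix, est_prefix by lia. reflexivity.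
  - intros g Hg a. apply sumR_ext. intros. rewrite ref_dist_prefix; auto.
  - intros h Hh. subst n.
    rewrite <- (importance_weighting K (dew_kernel K et l d h)
                 (ref_dist K et l d (length h) (actions_of h)) (l (S (length h))))
      by (intros; apply dew_dist_pos; auto).
    apply sumR_ext. intros b _. f_equal. apply sumR_ext. intros c _.
    rewrite ref_dist_prefix by lia. f_equal. apply est_last.
Qed.

Hypothesis Hl : forall t c, (1 <= t)%nat -> (c < K)%nat -> 0 <= l t c <= 1.

Lemma Ex_pending_swap h b n c : (length h < n <= length h + d (S (length h)))%nat ->
  Ex K (dew_kernel K et l d) (n - S (length h)) (h ++ [b])
     (fun g => dew_dist K et l d n (actions_of g) c)
  = Ex K (dew_kernel K et l d) (n - S (length h)) (h ++ [0%nat])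
     (fun g => dew_dist K et l d n (actions_of g) c).
Proof.
  intros Hn. apply Ex_swap.
  - intros rest Hr a Ha. unfold dew_kernel. rewrite <- !app_assoc, !length_app. simpl.
    apply dew_dist_swap. lia.
  - intros rest Hr. rewrite <- !app_assoc. apply dew_dist_swap. lia.
Qed.

(* Conditionally on the first [i] actions [h] and on the action [b] of round
   [i + 1], the expected [p_{n+1}]-average of round [i + 1]'s estimate is
   [l_{i+1}^b / p_{i+1}^b] times the expected [p_{n+1}^b]; weighting by
   [p_{i+1}^b] cancels the importance weight.  The expectation of [p_{n+1}^b]
   does not depend on [b] while round [i + 1] is pending at round [n]. *)
Lemma est_mass_given_action T n h b : (length h < n < T)%nat ->
  (n <= length h + d (S (length h)))%nat -> (b < K)%nat ->
  dew_kernel K et l d h b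
  * Ex K (dew_kernel K et l d) (T - S (length h)) (h ++ [b])
       (fun g => est_mass K et l d n (actions_of g) (S (length h)))
  = l (S (length h)) b
    * Ex K (dew_kernel K et l d) (n - S (length h)) (h ++ [0%nat])
         (fun g => dew_dist K et l d n (actions_of g) b).
Proof.
  intros Hn Hpend Hb.
  set (i := length h).
  replace (T - S i)%nat with ((n - S i) + (T - n))%nat by (unfold i; lia). rewrite Ex_tower.
  pose proof (dew_dist_pos K et l d HK i (actions_of h) b) as Hp.
  rewrite (Ex_ext K _ (n - S i) (h ++ [b]) _
             (fun g => (l (S i) b / dew_kernel K et l d h b) * dew_dist K et l d n (actions_of g) b)).
  2:{ intros rest Hr.
      rewrite (Ex_stable K _ dew_kernel_sum _ _ n)
        by (try (intros g Hg a; apply est_mass_prefix); rewrite ?length_app; simpl; unfold i in *; lia).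
      rewrite est_mass_eq, <- app_assoc. simpl app. unfold i. rewrite actions_of_last.
      destruct (Nat.ltb_spec b K); [|lia].
      replace (S (length h) - 1)%nat with (length h) by lia.
      rewrite (dew_dist_prefix (length h) h (b :: rest)) by lia.
      unfold dew_kernel, i in *. field. lra. }
  rewrite Ex_scal, <- Rmult_assoc.
  replace (dew_kernel K et l d h b * (l (S i) b / dew_kernel K et l d h b)) with (l (S i) b)
    by (unfold dew_kernel, i in *; field; lra).
  f_equal. apply Ex_pending_swap. unfold i in *. lia.
Qed.

Lemma E_est_mass T n i : (i < n)%nat -> (n < T)%nat -> (n <= i + d (S i))%nat ->
  E T (fun g => est_mass K et l d n (actions_of g) (S i)) <= 1.
Proof.
  intros Hi HT Hn.
  replace T with (i + S (T - S i))%nat by lia. rewrite Ex_tower.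
  rewrite <- (Ex_const K _ dew_kernel_sum i [] 1).
  apply (Ex_le K _ (fun h a _ => dew_kernel_nonneg h a)). intros h Hh. subst i. cbn [Ex app].
  rewrite (sumR_ext K _ _ (fun b Hb => est_mass_given_action T n h b
                                           ltac:(lia) ltac:(lia) Hb)).
  set (m := (n - S (length h))%nat). set (h0 := h ++ [0%nat]).
  rewrite (sumR_ext K _ (fun b => Ex K (dew_kernel K et l d) m h0
                      (fun g => l (S (length h)) b * dew_dist K et l d n (actions_of g) b)))
    by (intros; rewrite Ex_scal; reflexivity).
  rewrite <- Ex_sumR by apply dew_kernel_sum.
  rewrite <- (Ex_const K _ dew_kernel_sum m h0 1).
  apply (Ex_le K _ (fun h a _ => dew_kernel_nonneg h a)). intros rest _.
  rewrite <- (dew_dist_sum K et l d HK n (actions_of (h0 ++ rest))).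
  apply sumR_le. intros b Hb.
  pose proof (dew_dist_pos K et l d HK n (actions_of (h0 ++ rest)) b).
  pose proof (Hl (S (length h)) b ltac:(lia) Hb). nra.
Qed.

Hypothesis Het : 0 < et.

Lemma E_pending_mass T n : (n < T)%nat ->
  E T (fun g => pending_mass K et l d n (actions_of g))
  <= sumR n (fun i => if (S i + d (S i) <=? n)%nat then 0 else 1).
Proof.
  intros HT. unfold pending_mass. rewrite Ex_sumR by apply dew_kernel_sum.
  apply sumR_le. intros i Hi. destruct (Nat.leb_spec (S i + d (S i)) n).
  - rewrite Ex_const by apply dew_kernel_sum. lra.
  - apply E_est_mass; lia.
Qed.

Lemma E_dew_vs_ref T :
  E T (fun g => sumR T (fun n => l (S n) (nth n g 0%nat)))
  <= sumR T (fun n => E T (fun g => sumR K (fun c => ref_dist K et l d n (actions_of g) c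
                                               * est K et l d (actions_of g) (S n) c)))
     + et * sumR T (fun n => sumR n (fun i => if (S i + d (S i) <=? n)%nat then 0 else 1)).
Proof.
  rewrite Ex_sumR by apply dew_kernel_sum.
  rewrite <- sumR_scal, <- sumR_plus. apply sumR_le. intros n Hn.
  rewrite E_loss, E_ref_est by auto.
  apply Rle_trans with (E T (fun g => sumR K (fun c => ref_dist K et l d n (actions_of g) c * l (S n) c))
                        + et * E T (fun g => pending_mass K et l d n (actions_of g))).
  - rewrite <- Ex_scal, <- Ex_plus.
    apply (Ex_le K _ (fun h a _ => dew_kernel_nonneg h a)). intros rest _.
    pose proof (dew_ref_gap K et l d HK Hl Het n (actions_of ([] ++ rest))) as Hgap.
    rewrite (sumR_ext K _ (fun b => dew_dist K et l d n (actions_of ([] ++ rest)) b * l (S n) b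
                              - ref_dist K et l d n (actions_of ([] ++ rest)) b * l (S n) b))
      in Hgap by (intros; ring).
    rewrite sumR_minus in Hgap. lra.
  - apply Rplus_le_compat_l, Rmult_le_compat_l; [lra|]. apply E_pending_mass; auto.
Qed.

Variable dmax : R.
Hypothesis Hd : forall t, (1 <= t)%nat -> INR (d t) <= dmax.
Hypothesis Hc : et * (4 * exp 1 * dmax) <= 1.

(* Since [q_{n+1} <= e p_{n+1}], the reference-weighted variance term
   [sum_c q^c (l^c)^2 / p^c] is at most [K e]. *)
Lemma ref_variance_le n A :
  sumR K (fun c => ref_dist K et l d n A c * (l (S n) c ^ 2 / dew_dist K et l d n A c))
  <= INR K * exp 1.
Proof.
  rewrite <- sumR_const. apply sumR_le. intros c Hcb.
  pose proof (ref_dist_le K et l d HK Hl Het dmax Hd Hc n A c Hcb) as Hqp.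
  pose proof (dew_dist_pos K et l d HK n A c) as Hp.
  pose proof (ew_pos K et HK (full_loss K et l d n A) c) as Hq.
  pose proof (Hl (S n) c ltac:(lia) Hcb) as Hlc.
  set (q := ref_dist K et l d n A c) in *. set (p := dew_dist K et l d n A c) in *.
  set (y := l (S n) c) in *.
  replace (q * (y ^ 2 / p)) with ((q / p) * y ^ 2) by (field; lra).
  assert (q / p <= exp 1).
  { apply Rmult_le_reg_r with p; auto. unfold Rdiv. rewrite Rmult_assoc, Rinv_l; lra. }
  assert (y ^ 2 <= 1) by nra.
  assert (0 <= q / p) by (apply Rlt_le, Rdiv_lt_0_compat; auto).
  pose proof (exp_pos 1). nra.
Qed.

Lemma E_ref_est_sq T n : (n < T)%nat ->
  E T (fun g => sumR K (fun c => ref_dist K et l d n (actions_of g) c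
                                 * est K et l d (actions_of g) (S n) c ^ 2))
  <= INR K * exp 1.
Proof.
  intros HT.
  rewrite (Ex_condition K _ dew_kernel_sum T n _ (fun g => sumR K (fun c =>
             ref_dist K et l d n (actions_of g) c
             * (l (S n) c ^ 2 / dew_dist K et l d n (actions_of g) c)))); auto.
  - rewrite <- (Ex_const K _ dew_kernel_sum T [] (INR K * exp 1)).
    apply (Ex_le K _ (fun h a _ => dew_kernel_nonneg h a)). intros rest _.
    apply ref_variance_le.
  - intros g Hg a. apply sumR_ext. intros. rewrite ref_dist_prefix, est_prefix by lia.
    reflexivity.
  - intros g Hg a. apply sumR_ext. intros. rewrite ref_dist_prefix, dew_dist_prefix; auto.
  - intros h Hh. subst n.
    rewrite <- (importance_weighting K (dew_kernel K et l d h)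
       (ref_dist K et l d (length h) (actions_of h))
       (fun c => l (S (length h)) c ^ 2 / dew_dist K et l d (length h) (actions_of h) c))
      by (intros; apply dew_dist_pos; auto).
    apply sumR_ext. intros b _. f_equal. apply sumR_ext. intros c _.
    rewrite ref_dist_prefix by lia. f_equal. rewrite est_last. destruct (Nat.eqb b c); [|ring].
    pose proof (dew_dist_pos K et l d HK (length h) (actions_of h) c).
    unfold dew_kernel. field. lra.
Qed.

(* Second half: the reference distributions are Hedge on the estimated losses,
   whose expectations are the true losses and whose second moments are at most
   [K e] per round. *)
Lemma E_ref_regret T a : (a < K)%nat ->
  sumR T (fun n => E T (fun g => sumR K (fun c => ref_dist K et l d n (actions_of g) c
                                          * est K et l d (actions_of g) (S n) c)))
  - cum_loss T l a
  <= ln (INR K) / et + et * (INR K * INR T * exp 1 / 2).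
Proof.
  intros Ha.
  assert (Hcum : cum_loss T l a = E T (fun g => full_loss K et l d T (actions_of g) a)).
  { unfold full_loss. rewrite Ex_sumR by apply dew_kernel_sum.
    apply sumR_ext. intros n Hn. symmetry. apply E_est; auto. }
  assert (Hvar : E T (fun g => sumR T (fun n => sumR K (fun c =>
                   ref_dist K et l d n (actions_of g) c * est K et l d (actions_of g) (S n) c ^ 2)))
                 <= INR T * (INR K * exp 1)).
  { rewrite Ex_sumR, <- sumR_const by apply dew_kernel_sum.
    apply sumR_le. intros n Hn. apply E_ref_est_sq; auto. }
  rewrite Hcum, <- Ex_sumR, <- Ex_minus by apply dew_kernel_sum.
  apply Rle_trans with (E T (fun g => ln (INR K) / et + et / 2 * sumR T (fun n => sumR K (fun c =>
                   ref_dist K et l d n (actions_of g) c * est K et l d (actions_of g) (S n) c ^ 2)))).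
  - apply (Ex_le K _ (fun h a _ => dew_kernel_nonneg h a)). intros rest _.
    set (A := actions_of ([] ++ rest)).
    exact (hedge_regret K et (fun n c => est K et l d A (S n) c) HK Het
             (fun n c Hcb => est_nonneg K et l d HK Hl A (S n) c ltac:(lia) Hcb) T a Ha).
  - rewrite Ex_plus, Ex_scal, Ex_const by apply dew_kernel_sum.
    assert (et / 2 * E T (fun g => sumR T (fun n => sumR K (fun c =>
               ref_dist K et l d n (actions_of g) c * est K et l d (actions_of g) (S n) c ^ 2)))
            <= et / 2 * (INR T * (INR K * exp 1))) by (apply Rmult_le_compat_l; lra).
    lra.
Qed.

End Histories.

Lemma dew_regret_effective K T l d dmax et a : (1 <= K)%nat -> 0 < et -> (a < K)%nat ->
  (forall t c, (1 <= t)%nat -> (c < K)%nat -> 0 <= l t c <= 1) ->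
  (forall t, (1 <= t)%nat -> INR (d t) <= dmax) ->
  et * (4 * exp 1 * dmax) <= 1 ->
  Ex K (dew_kernel K et l d) T [] (fun g => sumR T (fun n => l (S n) (nth n g 0%nat)))
  - cum_loss T l a
  <= ln (INR K) / et + et * (INR K * INR T * exp 1 / 2 + total_delay T d).
Proof.
  intros HK Het Ha Hl Hd Hc.
  pose proof (E_dew_vs_ref K et l d HK Hl Het T) as Hdelay.
  pose proof (E_ref_regret K et l d HK Hl Het dmax Hd Hc T a Ha) as Hhedge.
  pose proof (pending_total_le_delay d T) as Hcount.
  assert (et * sumR T (fun n => sumR n (fun i => if (S i + d (S i) <=? n)%nat then 0 else 1))
          <= et * total_delay T d) by (apply Rmult_le_compat_l; lra).
  lra.
Qed.

Lemma dew_exp_loss_Ex K eta dmax l d n h : (1 <= K)%nat ->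
  dew_exp_loss K eta dmax l d n h =
  Ex K (dew_kernel K (eta_prime eta dmax) l d) n h
     (fun g => sumR n (fun i => l (S (length h + i)) (nth (length h + i) g 0%nat))).
Proof.
  intros HK. revert h. induction n as [|n IH]; intros h; [reflexivity|]. cbn [Ex dew_exp_loss].
  apply sumR_ext. intros a _. f_equal. rewrite IH.
  rewrite <- (Ex_const K _ (dew_kernel_sum K (eta_prime eta dmax) l d HK) n (h ++ [a])
                (l (S (length h)) a)) at 1.
  rewrite <- Ex_plus. apply Ex_ext. intros rest _.
  rewrite sumR_shift, Nat.add_0_r, <- app_assoc. simpl app.
  replace (nth (length h) (h ++ a :: rest) 0%nat) with a
    by (rewrite app_nth2, Nat.sub_diag by lia; reflexivity).
  f_equal. rewrite length_app. simpl length. apply sumR_ext. intros i _.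
  replace (length h + S i)%nat with (length h + 1 + i)%nat by lia. reflexivity.
Qed.

Lemma eta_prime_spec eta dmax c : 0 < eta -> 0 <= dmax -> 0 <= c ->
  let et := eta_prime eta dmax in
  0 < et /\ et <= eta /\ et * (4 * exp 1 * dmax) <= 1 /\
  c / et <= Rmax (c / eta) (4 * exp 1 * dmax * c).
Proof.
  intros Heta Hdm Hcnn. pose proof (exp_pos 1). unfold eta_prime.
  destruct (Rle_dec (eta * (4 * exp 1 * dmax)) 1) as [Hle|Hgt].
  - repeat split; auto; try lra. apply Rmax_l.
  - apply Rnot_le_lt in Hgt.
    assert (0 < 4 * exp 1 * dmax)
      by (destruct (Rle_dec (4 * exp 1 * dmax) 0); [nra | lra]).
    repeat split.
    + apply Rinv_0_lt_compat; auto.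
    + apply Rmult_le_reg_r with (4 * exp 1 * dmax); auto. rewrite Rinv_l by lra. lra.
    + rewrite Rinv_l by lra. lra.
    + eapply Rle_trans; [|apply Rmax_r]. right. unfold Rdiv. rewrite Rinv_inv. ring.
Qed.

Lemma dew_regret_bound K T l d dmax eta a : (2 <= K)%nat -> 0 < eta -> (a < K)%nat ->
  (forall t c, (1 <= t)%nat -> (c < K)%nat -> 0 <= l t c <= 1) ->
  (forall t, (1 <= t)%nat -> INR (d t) <= dmax) ->
  dew_expected_loss K T eta dmax l d - cum_loss T l a <=
    Rmax (ln (INR K) / eta) (4 * exp 1 * dmax * ln (INR K))
    + eta * (INR K * INR T * exp 1 / 2 + total_delay T d).
Proof.
  intros HK Heta Ha Hl Hd.
  assert (HlnK : 0 <= ln (INR K)).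
  { rewrite <- ln_1. apply ln_le; [lra|]. apply (le_INR 1). lia. }
  destruct (eta_prime_spec eta dmax (ln (INR K)) Heta (dmax_nonneg d dmax Hd) HlnK)
    as [Het [Hle [Hc Hmax]]].
  assert (HX : 0 <= INR K * INR T * exp 1 / 2 + total_delay T d).
  { assert (0 <= total_delay T d) by (apply sumR_nonneg; intros; apply pos_INR).
    pose proof (pos_INR K). pose proof (pos_INR T). pose proof (exp_pos 1).
    assert (0 <= INR K * INR T) by (apply Rmult_le_pos; lra).
    assert (0 <= INR K * INR T * exp 1) by (apply Rmult_le_pos; lra). lra. }
  unfold dew_expected_loss. rewrite dew_exp_loss_Ex by lia.
  pose proof (dew_regret_effective K T l d dmax (eta_prime eta dmax) a ltac:(lia) Het Ha Hl Hd Hc)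
    as Hbound.
  assert (eta_prime eta dmax * (INR K * INR T * exp 1 / 2 + total_delay T d)
          <= eta * (INR K * INR T * exp 1 / 2 + total_delay T d))
    by (apply Rmult_le_compat_r; lra).
  eapply Rle_trans; [exact Hbound|]. lra.
Qed.

Lemma tuned_rate_value X L c : 0 < X -> 0 < L -> sqrt (L / X) * c <= 1 ->
  Rmax (L / sqrt (L / X)) (c * L) + sqrt (L / X) * X = 2 * sqrt (X * L).
Proof.
  intros HX HL Hc.
  set (eta := sqrt (L / X)) in *.
  assert (Heta : 0 < eta) by (apply sqrt_lt_R0, Rdiv_lt_0_compat; auto).
  assert (Hsq : eta * eta = L / X) by (apply sqrt_sqrt, Rlt_le, Rdiv_lt_0_compat; auto).
  assert (HLeta : L / eta = X * eta).
  { replace L with (X * (eta * eta)) at 1 by (rewrite Hsq; field; lra). field. lra. }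
  assert (Hsqrt : sqrt (X * L) = X * eta).
  { replace (X * L) with ((X * eta) * (X * eta))
      by (replace L with (X * (eta * eta)) by (rewrite Hsq; field; lra); ring).
    apply sqrt_square. nra. }
  rewrite Rmax_left, HLeta, Hsqrt; [ring|].
  rewrite HLeta. replace (X * eta) with (L / eta) by (rewrite HLeta; reflexivity).
  apply Rmult_le_reg_r with eta; auto.
  replace (L / eta * eta) with L by (field; lra). nra.
Qed.

Theorem theorem1 (K T : nat) (l : nat -> nat -> R) (d : nat -> nat) (dmax : R)
  (hK : (2 <= K)%nat) (hT : (1 <= T)%nat)
  (hl : forall t a, (1 <= t)%nat -> (a < K)%nat -> 0 <= l t a <= 1)
  (hd : forall t, (1 <= t)%nat -> INR (d t) <= dmax) :
  (forall eta : R, 0 < eta ->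
     forall a, (a < K)%nat ->
       dew_expected_loss K T eta dmax l d - cum_loss T l a <=
         Rmax (ln (INR K) / eta) (4 * exp 1 * dmax * ln (INR K))
         + eta * (INR K * INR T * exp 1 / 2 + total_delay T d))
  /\
  (forall eta : R,
     eta = sqrt (ln (INR K) / (INR K * INR T * exp 1 / 2 + total_delay T d)) ->
     eta * (4 * exp 1 * dmax) <= 1 ->
     forall a, (a < K)%nat ->
       dew_expected_loss K T eta dmax l d - cum_loss T l a <=
         2 * sqrt ((INR K * INR T * exp 1 / 2 + total_delay T d) * ln (INR K))).
Proof.
  split; [intros eta Heta a Ha; apply dew_regret_bound; auto|].
  intros eta Heq Hc a Ha.
  set (X := INR K * INR T * exp 1 / 2 + total_delay T d) in *.
  assert (HlnK : 0 < ln (INR K)).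
  { rewrite <- ln_1. apply ln_increasing; [lra|]. apply lt_1_INR. lia. }
  assert (HX : 0 < X).
  { assert (1 <= INR K) by (apply (le_INR 1); lia).
    assert (1 <= INR T) by (apply (le_INR 1); lia). pose proof (exp_pos 1).
    assert (0 <= total_delay T d) by (apply sumR_nonneg; intros; apply pos_INR).
    assert (0 < INR K * INR T * exp 1) by (apply Rmult_lt_0_compat; [nra|lra]).
    unfold X. lra. }
  rewrite <- (tuned_rate_value X (ln (INR K)) (4 * exp 1 * dmax)) by (auto; rewrite <- Heq; auto).
  rewrite <- Heq. apply dew_regret_bound; auto.
  rewrite Heq. apply sqrt_lt_R0, Rdiv_lt_0_compat; auto.
Qed.
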